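(* Let $n\ge 2$ and let $X\subseteq\mathbb{Z}_{2n}^2$ with $|X|=4n+1$. Suppose there is $a\in\mathbb{Z}_{2n}$ such that exactly $2n-1$ elements of $X$ have first coordinate $a$. Then there exists $S\subseteq X$ with $|S|=2n$ and $\sum_{s\in S}s=(0,0)$. *)

From mathcomp Require Import all_boot all_algebra.
Set Implicit Arguments. Unset Strict Implicit. Unset Printing Implicit Defensive.

From mathcomp Require Import all_boot all_algebra zify.
From Stdlib Require Import Classical.
Set Implicit Arguments. Unset Strict Implicit. Unset Printing Implicit Defensive.
Import GRing.Theory.
Local Open Scope ring_scope.

(* Let Z = Z_2n.  The 2n - 1 points of X with first coordinate a are the
   (a, y) with y != c for a single missing value c.  Since 2n * (a, c) = 0,
   translating by (a, c) does not change the problem, and afterwards X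
   contains every (0, d) with d != 0 together with a set B of 2n + 2 points
   of nonzero first coordinate.  It then suffices to find T in B whose first
   coordinates sum to 0 and whose second coordinates sum to s, such that -s
   is a sum of 2n - |T| distinct nonzero elements of Z ("T is completable").

   Call two points opposite if their first coordinates
   sum to 0.  An opposite pair whose second coordinates do not sum to n, or
   two disjoint opposite pairs, is completable.  Otherwise some 2n points of
   B contain no opposite pair; among them either some 3 to 2n - 2 points have
   first coordinates summing to 0, or 2n - 1 of them share a first
   coordinate g generating Z, and one further point of B completes them. *)

Lemma subset_of_card (T : finType) (A : {set T}) (k : nat) :
  (k <= #|A|)%N -> exists2 B : {set T}, B \subset A & #|B| = k.
Proof.
elim: k => [|k IHk] lekA; first by exists set0; rewrite ?sub0set ?cards0.
have [B sBA cardB] := IHk (ltnW lekA).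
have /card_gt0P [x] : (0 < #|A :\: B|)%N by rewrite cardsDS // cardB subn_gt0.
rewrite inE => /andP [xNB xA].
exists (x |: B); first by rewrite subUset sub1set xA sBA.
by rewrite cardsU1 xNB cardB.
Qed.

Lemma setC1_of_card (T : finType) (Y : {set T}) :
  #|Y| = #|T|.-1 -> (0 < #|T|)%N -> exists c, Y = [set~ c].
Proof.
move=> cardY T_gt0; have /eqP/cards1P [c Yc] : #|~: Y| = 1%N.
  by move: (cardsC Y); rewrite cardY; lia.
by exists c; rewrite -Yc setCK.
Qed.

Lemma sum_setU_disjoint (T : finType) (G : zmodType) (A B : {set T})
    (F : T -> G) :
  [disjoint A & B] ->
  \sum_(x in A :|: B) F x = \sum_(x in A) F x + \sum_(x in B) F x.
Proof. by move=> disjAB; rewrite -bigU //; apply: eq_bigl => x; rewrite inE. Qed.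

Lemma sum_pairE (I : finType) (U V : zmodType) (A : {pred I})
    (F : I -> U * V) :
  \sum_(i in A) F i = (\sum_(i in A) (F i).1, \sum_(i in A) (F i).2).
Proof.
by rewrite [LHS]surjective_pairing (big_morph fst (fun _ _ => erefl) erefl)
  (big_morph snd (fun _ _ => erefl) erefl).
Qed.

Lemma subset_sum_avoid (T : finType) (G : zmodType) (f : T -> G)
    (W : {set T}) (m : nat) (b : G) :
  {in W &, injective f} -> (0 < m < #|W|)%N ->
  exists2 V : {set T}, V \subset W & #|V| = m /\ \sum_(w in V) f w != b.
Proof.
move=> inj_f /andP [m_gt0 lt_mW].
have [V sVW cardV] := subset_of_card (ltnW lt_mW).
have [sumV|] := eqVneq (\sum_(w in V) f w) b; last by exists V.
have /card_gt0P [w wV] : (0 < #|V|)%N by rewrite cardV.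
have /card_gt0P [w'] : (0 < #|W :\: V|)%N by rewrite cardsDS // cardV subn_gt0.
rewrite inE => /andP [w'NV w'W].
have w'Nw : w' \notin V :\ w by rewrite !inE negb_and w'NV orbT.
exists (w' |: (V :\ w)).
  by rewrite subUset sub1set w'W (subset_trans (subD1set _ _)).
split; first by rewrite cardsU1 w'Nw; move: (cardsD1 w V); rewrite wV cardV; lia.
rewrite big_setU1 //= -sumV (big_setD1 w wV) /= (inj_eq (addIr _)).
by apply: contra w'NV => /eqP/inj_f -> //; apply: (subsetP sVW).
Qed.

Section ZeroSumFree.

Variables (T : finType) (G : zmodType) (f : T -> G) (W : {set T}).

Definition zero_sum_free :=
  forall S : {set T}, S \subset W -> S != set0 -> \sum_(t in S) f t != 0.

Lemma not_zero_sum_free : ~ zero_sum_free ->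
  exists2 S : {set T}, S \subset W & S != set0 /\ \sum_(t in S) f t = 0.
Proof.
move=> not_zsf; apply: NNPP => no_S; apply: not_zsf => S sSW S_neq0.
by apply/eqP => sum0; apply: no_S; exists S.
Qed.

Hypothesis zsfW : zero_sum_free.

Lemma zero_sum_free_seq (s : seq T) :
  uniq s -> {subset s <= W} -> s != [::] -> \sum_(z <- s) f z != 0.
Proof.
move=> uniq_s sW s_nil.
have -> : \sum_(z <- s) f z = \sum_(z in [set z in s]) f z.
  by rewrite big_uniq //; apply: eq_bigl => z; rewrite inE.
apply: zsfW; first by apply/subsetP => z; rewrite inE; apply: sW.
case: s s_nil uniq_s sW => // z s _ _ _.
by apply/set0Pn; exists z; rewrite inE mem_head.
Qed.

Lemma partial_sums_inj (s : seq T) : uniq s -> {subset s <= W} ->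
  injective (fun i : 'I_(size s).+1 => \sum_(z <- take i s) f z).
Proof.
move=> uniq_s sW.
have neq_lt (i j : nat) : (i < j <= size s)%N ->
    \sum_(z <- take i s) f z != \sum_(z <- take j s) f z.
  move=> /andP [lt_ij le_js]; rewrite -(subnKC (ltnW lt_ij)) takeD big_cat /=.
  rewrite -subr_eq0 opprD addrA subrr sub0r oppr_eq0.
  apply: zero_sum_free_seq.
  - by rewrite take_uniq ?drop_uniq.
  - by move=> z /mem_take /mem_drop; apply: sW.
  - by rewrite -size_eq0 size_takel ?size_drop ?subn_eq0 -?ltnNge // leq_sub2r.
move=> i j eq_ij; apply/val_inj/eqP.
have [lt_ij|lt_ji|//] := ltngtP i j.
- by move: (neq_lt i j); rewrite lt_ij leq_ord eq_ij eqxx => /(_ isT).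
- by move: (neq_lt j i); rewrite lt_ji leq_ord eq_ij eqxx => /(_ isT).
Qed.

End ZeroSumFree.

(* A zero-sum free family of |G| - 1 elements of a finite abelian group is
   constant: listing it as x, y, ..., its |G| partial sums exhaust G, and
   f y can only be the partial sum f x. *)
Lemma zero_sum_free_constant (G : finZmodType) (T : finType) (f : T -> G)
    (W : {set T}) :
  zero_sum_free f W -> #|W| = #|G|.-1 -> {in W &, forall x y, f x = f y}.
Proof.
move=> zsfW cardW x y xW yW.
have [-> //|neq_xy] := eqVneq x y.
pose r := enum (W :\ x :\ y); pose s := [:: x, y & r].
have mem_r z : (z \in r) = [&& z != y, z != x & z \in W].
  by rewrite mem_enum !inE.
have uniq_s : uniq s.
  by rewrite /= !inE negb_or neq_xy !mem_r !eqxx /= andbF enum_uniq.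
have sW : {subset s <= W}.
  by move=> z; rewrite !inE mem_r => /or3P [/eqP ->|/eqP ->|/and3P []].
have size_s : size s = #|W|.
  rewrite -(card_uniqP uniq_s); apply: eq_card => z; rewrite !inE mem_r.
  by case: eqP => [->|_]; case: eqP => [->|_]; rewrite /= ?xW ?yW.
have le_card : (#|G| <= #|'I_(size s).+1|)%N.
  by rewrite card_ord size_s cardW; case: #|G|.
have /codomP [[[|[|k]] lt_k] /= fyQ] :=
  inj_card_onto (partial_sums_inj zsfW uniq_s sW) le_card (f y).
- have y_sub : {subset [:: y] <= W} by move=> z; rewrite inE => /eqP ->.
  have := zero_sum_free_seq zsfW (s := [:: y]) isT y_sub isT.
  by rewrite big_seq1 fyQ big_nil eqxx.
- by rewrite fyQ /= big_seq1.
- have uniq_xr : uniq (x :: take k r).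
    move: uniq_s; rewrite /= !inE negb_or => /andP [/andP [_ xNr] /andP [_ uniq_r]].
    by rewrite (contra (@mem_take _ _ _ _) xNr) take_uniq.
  have xr_sub : {subset x :: take k r <= W}.
    by move=> z /predU1P [->|/mem_take zr] //; apply: sW; rewrite !inE zr !orbT.
  have sum0 : \sum_(z <- x :: take k r) f z = 0.
    by apply: (addrI (f y)); rewrite addr0 {2}fyQ /= !big_cons addrCA.
  by have := zero_sum_free_seq zsfW uniq_xr xr_sub isT; rewrite sum0 eqxx.
Qed.

Lemma multiples_onto (G : finZmodType) (g : G) :
  (forall k, (0 < k < #|G|)%N -> g *+ k != 0) ->
  forall h : G, exists2 j, (j < #|G|)%N & h = g *+ j.
Proof.
move=> ng0 h.
have neq_lt (i j : 'I_#|G|) : (i < j)%N -> g *+ i != g *+ j.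
  move=> lt_ij; rewrite eq_sym -subr_eq0 -mulrnBr; last exact: ltnW.
  apply: ng0; rewrite subn_gt0 lt_ij /=.
  exact: leq_ltn_trans (leq_subr _ _) (ltn_ord j).
have inj_mul : injective (fun j : 'I_#|G| => g *+ j).
  move=> i j eq_ij; apply/val_inj/eqP; have [lt|lt|//] := ltngtP i j.
  - by move: (neq_lt _ _ lt); rewrite eq_ij eqxx.
  - by move: (neq_lt _ _ lt); rewrite eq_ij eqxx.
have le_card : (#|G| <= #|'I_#|G| |)%N by rewrite card_ord.
by have /codomP [j ->] := inj_card_onto inj_mul le_card h; exists j.
Qed.

(* Hence a zero-sum free family of |G| - 1 elements is |G| - 1 copies of a
   generator g (the sums of its k-subfamilies are the g *+ k). *)
Lemma zero_sum_free_max (G : finZmodType) (T : finType) (f : T -> G)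
    (W : {set T}) :
  (1 < #|G|)%N -> zero_sum_free f W -> #|W| = #|G|.-1 ->
  exists2 g : G, {in W, forall w, f w = g} &
    forall k, (0 < k < #|G|)%N -> g *+ k != 0.
Proof.
move=> G_gt1 zsfW cardW.
have /card_gt0P [w0 w0W] : (0 < #|W|)%N by rewrite cardW -ltnS prednK // ltnW.
have const_f := zero_sum_free_constant zsfW cardW.
exists (f w0) => [w wW|k /andP [k_gt0 k_lt]]; first exact: const_f.
have le_kW : (k <= #|W|)%N by rewrite cardW -ltnS prednK // ltnW.
have [S sSW cardS] := subset_of_card le_kW.
rewrite -cardS -sumr_const.
rewrite -(eq_bigr _ (fun w wS => const_f w w0 (subsetP sSW w wS) w0W)).
by apply: zsfW; rewrite // -card_gt0 cardS.
Qed.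

Section EvenCyclic.

Variable n : nat.
Hypothesis n_gt0 : (0 < n)%N.
Local Notation Z := 'Z_(n.*2).
Local Notation Pt := (Z * Z)%type.

Lemma double_gt1 : (1 < n.*2)%N. Proof. lia. Qed.

Lemma card_Z : #|Z| = n.*2.
Proof. by rewrite card_ord Zp_cast // double_gt1. Qed.

Lemma mulrn_double (x : Z) : x *+ n.*2 = 0.
Proof. by rewrite -mulr_natr pchar_Zp ?mulr0 // double_gt1. Qed.

Lemma opp_half : - (n%:R : Z) = n%:R.
Proof.
by apply/eqP; rewrite eq_sym -subr_eq0 opprK -mulr2n -mulrnA muln2 mulrn_double.
Qed.

(* The elements of Z sum to n: 0 + 1 + ... + (2n - 1) = 2n * n - n. *)
Lemma sum_Z : \sum_(x : Z) x = n%:R.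
Proof.
rewrite (eq_bigr (fun x : Z => (x : nat)%:R)) => [|x _]; last by rewrite natr_Zp.
rewrite -(big_mkord xpredT (fun i => i%:R)) Zp_cast ?double_gt1 // -natr_sum.
rewrite bin2_sum bin2 -doubleMl doubleK.
have -> : (n * (n.*2).-1 = n * n.*2 - n)%N by rewrite -subn1 mulnBr muln1.
rewrite natrB ?leq_pmulr ?double_gt0 // natrM pchar_Zp ?double_gt1 //.
by rewrite mulr0 sub0r opp_half.
Qed.

Lemma double_eq0 (x : Z) : x + x = 0 -> x = 0 \/ x = n%:R.
Proof.
move=> xx0; have lt_x : (x < n.*2)%N.
  by have := ltn_ord x; rewrite [X in (_ < X)%N]Zp_cast ?double_gt1.
have mod_xx : ((x + x) %% n.*2 = 0)%N.
  by rewrite -val_Zp_nat ?double_gt1 // natrD natr_Zp xx0.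
suff [x0|xn] : x = 0%N :> nat \/ x = n :> nat.
- by left; apply: val_inj; rewrite /= x0.
- by right; apply: val_inj; rewrite /= val_Zp_nat ?double_gt1 // modn_small ?xn //; lia.
case: (ltnP x n) => [lt_xn|le_nx].
  by move: mod_xx; rewrite modn_small; lia.
by move: mod_xx; rewrite -(subnKC le_nx) addnACA addnn modnDl modn_small; lia.
Qed.

Lemma card_halves (t : Z) : (#|[set d : Z | (d + d)%R == t]| <= 2)%N.
Proof.
have [->|[d0]] := set_0Vmem [set d : Z | d + d == t]; first by rewrite cards0.
rewrite inE => /eqP d0d0.
apply: leq_trans (card_size [:: d0; d0 + n%:R]).
apply/subset_leq_card/subsetP => d; rewrite !inE => /eqP dd.
have /double_eq0 [/eqP|/eqP] : (d - d0) + (d - d0) = 0.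
  by rewrite addrACA -opprD dd d0d0 subrr.
- by rewrite subr_eq0 => ->.
- by rewrite subr_eq addrC => ->; rewrite orbT.
Qed.

Definition sum_of_nonzeros (m : nat) (t : Z) :=
  exists D : {set Z}, [/\ 0 \notin D, #|D| = m & \sum_(d in D) d = t].

(* For 2 <= m < n every t is such a sum: fix m - 2 nonzero elements E, then
   add a pair d, t' - d avoiding 0, E and each other; this excludes at most
   2m < 2n values of d. *)
Lemma sum_of_nonzeros_small (m : nat) (t : Z) :
  (2 <= m < n)%N -> sum_of_nonzeros m t.
Proof.
move=> /andP [m_ge2 lt_mn].
have [E sE cardE] : exists2 E : {set Z}, E \subset [set~ 0] & #|E| = (m - 2)%N.
  by apply: subset_of_card; rewrite cardsC1 card_Z; lia.
have E_0 : 0 \notin E by apply/negP => /(subsetP sE); rewrite !inE eqxx.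
pose t' := t - \sum_(e in E) e; pose E0 := 0 |: E.
pose bad := E0 :|: [set t' - e | e in E0] :|: [set d | d + d == t'].
have /card_gt0P [d] : (0 < #|~: bad|)%N.
  rewrite -(ltn_add2l #|bad|) addn0 cardsC card_Z.
  have card_E0 : #|E0| = (m - 1)%N by rewrite cardsU1 E_0 cardE; lia.
  have le_bad : (#|bad| <= (m - 1) + (m - 1) + 2)%N.
    apply: leq_trans (leq_card_setU _ _).1 _; apply: leq_add (card_halves t').
    apply: leq_trans (leq_card_setU _ _).1 _; rewrite card_E0 leq_add2l -card_E0.
    exact: leq_imset_card.
  lia.
rewrite !inE !negb_or => /andP [/andP [/andP [d_neq0 dNE] dNimg] dd].
have : t' - d \notin E0.
  apply: contra dNimg => tdE0; apply/imsetP; exists (t' - d) => //.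
  by rewrite subKr.
rewrite !inE negb_or => /andP [td_neq0 tdNE].
have d_neq_td : d != t' - d.
  by apply: contra dd => /eqP d_td; rewrite {2}d_td addrC subrK.
have dN : d \notin t' - d |: E by rewrite !inE negb_or d_neq_td.
exists (d |: (t' - d |: E)); split.
- by rewrite !inE !negb_or eq_sym d_neq0 eq_sym td_neq0.
- by rewrite !cardsU1 dN tdNE cardE; lia.
- by rewrite (big_setU1 _ dN) (big_setU1 _ tdNE) /= addrA [d + _]addrC !subrK.
Qed.

(* Complementation inside Z \ {0}, whose elements sum to n. *)
Lemma sum_of_nonzeros_compl (m : nat) (t : Z) :
  sum_of_nonzeros m t -> sum_of_nonzeros ((n.*2).-1 - m) (n%:R - t).
Proof.
case=> D [D0 cardD sumD].
have sD : D \subset [set~ 0].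
  by apply/subsetP => d dD; rewrite !inE; apply: contraNneq D0 => <-.
exists ([set~ 0] :\: D); split.
- by rewrite !inE eqxx andbF.
- by rewrite cardsDS // cardsC1 card_Z cardD.
- have sum_nz : \sum_(x in [set~ 0]) x = n%:R :> Z.
    by rewrite -sum_Z [RHS](bigD1 0) //= add0r; apply: eq_bigl => x; rewrite !inE.
  move: sum_nz; rewrite (big_setID D) /= (setIidPr sD) sumD => <-.
  by rewrite [t + _]addrC addrK.
Qed.

Lemma sum_of_nonzerosP (m : nat) (t : Z) : (m <= (n.*2).-2)%N ->
  (m = 0%N -> t = 0) -> (m = 1%N -> t != 0) -> (m = (n.*2).-2 -> t != n%:R) ->
  sum_of_nonzeros m t.
Proof.
move=> le_m t0 t1 tn.
have below (k : nat) (s : Z) : (k < n)%N ->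
    (k = 0%N -> s = 0) -> (k = 1%N -> s != 0) -> sum_of_nonzeros k s.
  case: k => [|[|k]] lt_kn s0 s1.
  - by exists set0; rewrite inE cards0 big_set0 s0.
  - by exists [set s]; rewrite inE cards1 big_set1 eq_sym s1.
  - exact: sum_of_nonzeros_small.
have [lt_mn|le_nm] := ltnP m n; first exact: below.
have /sum_of_nonzeros_compl : sum_of_nonzeros ((n.*2).-1 - m) (n%:R - t).
  apply: below => [|k0|k1]; [lia | lia |].
  by rewrite subr_eq0 eq_sym; apply: tn; lia.
by rewrite subKn ?subKr //; lia.
Qed.

(* k elements with sum s can be completed to 2n elements with sum 0 by
   adding distinct nonzero elements. *)
Definition completable (k : nat) (s : Z) :=
  (k <= n.*2)%N /\ sum_of_nonzeros (n.*2 - k) (- s).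

Lemma completableP (k : nat) (s : Z) : (2 <= k <= n.*2)%N ->
  (k = n.*2 -> s = 0) -> (k = (n.*2).-1 -> s != 0) -> (k = 2%N -> s != n%:R) ->
  completable k s.
Proof.
move=> /andP [k_ge2 le_k] s0 s1 sn; split => //.
apply: sum_of_nonzerosP => [|m0|m1|mn]; first lia.
- by rewrite s0 ?oppr0 //; lia.
- by rewrite oppr_eq0 s1 //; lia.
- by rewrite -opp_half eqr_opp sn //; lia.
Qed.

Definition has_completable_subset (B : {set Pt}) :=
  exists2 T : {set Pt}, T \subset B &
    \sum_(t in T) t.1 = 0 /\ completable #|T| (\sum_(t in T) t.2).

Lemma column_snd_inj (g : Z) (A : {set Pt}) :
  {in A, forall x, x.1 = g} -> {in A &, injective snd}.
Proof. by move=> A_g [x1 y1] [x2 y2] /A_g /= -> /A_g /= -> /= ->. Qed.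

Lemma card_column (g : Z) (A : {set Pt}) :
  {in A, forall x, x.1 = g} -> (#|A| <= n.*2)%N.
Proof.
move=> /column_snd_inj inj_snd; rewrite -(card_in_imset inj_snd).
by apply: leq_trans (max_card _) _; rewrite card_Z.
Qed.

(* 2n - 1 points W of B with first coordinate a generator g, plus one more
   point v with v.1 = g *+ j (2 <= j < 2n): v with 2n - j points of W has
   first coordinates summing to g *+ 2n = 0, and these points can be chosen
   to avoid the single bad second-coordinate sum. *)
Lemma completable_from_generator (B W : {set Pt}) (g : Z) (v : Pt) :
  W \subset B -> #|W| = (n.*2).-1 -> {in W, forall w, w.1 = g} ->
  (forall k, (0 < k < n.*2)%N -> g *+ k != 0) ->
  v \in B -> v.1 != 0 -> v.1 != g -> has_completable_subset B.
Proof.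
move=> sWB cardW W_g g_gen vB v_neq0 v_neq_g.
have vNW : v \notin W by apply: contra v_neq_g => /W_g ->.
have [j] : exists2 j, (j < #|Z|)%N & v.1 = g *+ j.
  by apply: multiples_onto; rewrite card_Z.
rewrite card_Z => lt_j vj.
have j_ge2 : (2 <= j)%N.
  case: j {lt_j} vj => [|[|//]] vj; first by move: v_neq0; rewrite vj eqxx.
  by move: v_neq_g; rewrite vj eqxx.
pose b := (if j == (n.*2).-1 then n%:R else 0) - v.2.
have [W' sW'W [cardW' sumW'_neq]] : exists2 W' : {set Pt}, W' \subset W &
    #|W'| = (n.*2 - j)%N /\ \sum_(w in W') w.2 != b.
  by apply: subset_sum_avoid; [exact: column_snd_inj W_g | rewrite cardW; lia].
have vNW' : v \notin W' by apply: contra vNW; apply: (subsetP sW'W).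
exists (v |: W'); first by rewrite subUset sub1set vB (subset_trans sW'W sWB).
rewrite !big_setU1 //= cardsU1 vNW' cardW'; split.
  rewrite (eq_bigr (fun=> g)) => [|w /(subsetP sW'W) /W_g //].
  by rewrite sumr_const cardW' vj -mulrnDr subnKC ?mulrn_double // ltnW.
apply: completableP => [|k_eq|k_eq|k_eq]; [lia | lia | |].
- move: sumW'_neq; rewrite /b ifN; last by apply/eqP; lia.
  apply: contra => /eqP sum0.
  by rewrite sub0r -(addKr v.2 (\sum_(w in W') w.2)) sum0 addr0.
- move: sumW'_neq; rewrite /b ifT; last by apply/eqP; lia.
  by apply: contra => /eqP sumn; rewrite -sumn [v.2 + _]addrC addrK.
Qed.

Definition no_opposite_pair (U : {set Pt}) :=
  forall P : {set Pt}, P \subset U -> #|P| = 2 -> \sum_(x in P) x.1 != 0.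

(* If the first coordinates of the 2n points of U are nonzero, pairwise
   non-opposite, and no 3 to 2n - 2 of them sum to 0, then 2n - 1 of them
   are zero-sum free: otherwise every U \ u would sum to 0, making all the
   u.1 equal to some g with (2n - 1) g = 0 = 2n g, i.e. g = 0. *)
Lemma zero_sum_free_hyperplane (U : {set Pt}) :
  #|U| = n.*2 -> {in U, forall u, u.1 != 0} -> no_opposite_pair U ->
  (forall T : {set Pt}, T \subset U -> \sum_(t in T) t.1 = 0 ->
     ~ (3 <= #|T| <= (n.*2).-2)%N) ->
  exists2 W : {set Pt}, W \subset U & #|W| = (n.*2).-1 /\ zero_sum_free fst W.
Proof.
move=> cardU U_neq0 no_opp no_mid.
have large (S : {set Pt}) : S \subset U -> S != set0 ->
    \sum_(s in S) s.1 = 0 -> ((n.*2).-1 <= #|S|)%N.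
  move=> sSU S_neq0 sumS; rewrite leqNgt; apply/negP => small.
  have [lt3|ge3] := ltnP #|S| 3; last by apply: no_mid sumS _; lia.
  have : (#|S| == 1%N) || (#|S| == 2%N) by rewrite -card_gt0 in S_neq0; lia.
  case/orP => [/cards1P [s S_s]|/eqP cardS]; last by move: sumS; apply/eqP/no_opp.
  move: sumS; rewrite S_s big_set1; apply/eqP/U_neq0/(subsetP sSU).
  by rewrite S_s set11.
have card_del u : u \in U -> #|U :\ u| = (n.*2).-1.
  by move=> uU; move: (cardsD1 u U); rewrite uU cardU; lia.
have [[u uU zsf_u]|no_zsf] :=
  classic (exists2 u, u \in U & zero_sum_free fst (U :\ u)).
  by exists (U :\ u); [exact: subD1set | rewrite card_del].
have sum_del u : u \in U -> \sum_(x in U :\ u) x.1 = 0.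
  move=> uU; have [S sS [S_neq0 sumS]] : exists2 S : {set Pt}, S \subset U :\ u &
      S != set0 /\ \sum_(x in S) x.1 = 0.
    by apply: not_zero_sum_free => zsf; apply: no_zsf; exists u.
  suff -> : U :\ u = S by [].
  apply/eqP; rewrite eq_sym eqEcard sS card_del //.
  exact: large (subset_trans sS (subD1set _ _)) S_neq0 sumS.
have /card_gt0P [u0 u0U] : (0 < #|U|)%N by rewrite cardU double_gt0.
pose g := \sum_(x in U) x.1.
have U_g u : u \in U -> u.1 = g.
  by move=> uU; rewrite /g (big_setD1 u) //= sum_del ?addr0.
have g_pred : g *+ (n.*2).-1 = 0.
  rewrite -(sum_del u0 u0U) -(card_del u0 u0U) -sumr_const.
  by apply: eq_bigr => x /setD1P [_ /U_g].
have g0 : g = 0.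
  by rewrite -[g]add0r -g_pred -mulrSr prednK ?mulrn_double ?double_gt0.
by move: (U_neq0 u0 u0U); rewrite U_g // g0 eqxx.
Qed.

(* 2n + 2 points with nonzero first coordinates containing 2n pairwise
   non-opposite ones: use a medium zero-sum subset if there is one, and the
   generator argument otherwise. *)
Lemma completable_no_opposite (B U : {set Pt}) :
  #|B| = (n.*2).+2 -> {in B, forall b, b.1 != 0} ->
  U \subset B -> #|U| = n.*2 -> no_opposite_pair U -> has_completable_subset B.
Proof.
move=> cardB B_neq0 sUB cardU no_opp.
have [[T sTU [sumT ge3 le2]]|no_mid] := classic (exists2 T : {set Pt},
    T \subset U & [/\ \sum_(t in T) t.1 = 0, (3 <= #|T|)%N & (#|T| <= (n.*2).-2)%N]).
  exists T; first exact: subset_trans sTU sUB.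
  by split => //; apply: completableP => [|k_eq|k_eq|k_eq]; lia.
have [W sWU [cardW zsfW]] : exists2 W : {set Pt}, W \subset U &
    #|W| = (n.*2).-1 /\ zero_sum_free fst W.
  apply: zero_sum_free_hyperplane => // [u uU|T sTU sumT /andP [ge3 le2]].
    exact/B_neq0/(subsetP sUB).
  by apply: no_mid; exists T.
have [g W_g g_gen] : exists2 g : Z, {in W, forall w, w.1 = g} &
    forall k, (0 < k < #|Z|)%N -> g *+ k != 0.
  by apply: zero_sum_free_max; rewrite ?card_Z ?double_gt1.
rewrite card_Z in g_gen.
have [v vB v_neq_g] : exists2 v, v \in B & v.1 != g.
  case: (pickP [pred b in B | b.1 != g]) => [v /andP [vB vg]|B_g].
    by exists v.
  suff : (#|B| <= n.*2)%N by rewrite cardB; lia.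
  by apply: (card_column (g := g)) => b bB; move: (B_g b); rewrite /= bB => /negbFE/eqP.
have sWB := subset_trans sWU sUB.
exact: completable_from_generator sWB cardW W_g g_gen vB (B_neq0 v vB) v_neq_g.
Qed.

Lemma completable_pair (B P : {set Pt}) : (1 < n)%N ->
  P \subset B -> #|P| = 2 -> \sum_(x in P) x.1 = 0 ->
  \sum_(x in P) x.2 != n%:R -> has_completable_subset B.
Proof.
move=> n_gt1 sPB cardP sum1 sum2; exists P => //; split => //.
by rewrite cardP; apply: completableP => [|k_eq|k_eq|//]; lia.
Qed.

Lemma completable_two_pairs (B P Q : {set Pt}) : (1 < n)%N ->
  P :|: Q \subset B -> [disjoint P & Q] -> #|P| = 2 -> #|Q| = 2 ->
  \sum_(x in P) x.1 = 0 -> \sum_(x in Q) x.1 = 0 ->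
  \sum_(x in P) x.2 = n%:R -> \sum_(x in Q) x.2 = n%:R ->
  has_completable_subset B.
Proof.
move=> n_gt1 sPQB disjPQ cardP cardQ sumP1 sumQ1 sumP2 sumQ2.
exists (P :|: Q) => //; rewrite !sum_setU_disjoint //.
rewrite sumP1 sumQ1 sumP2 sumQ2 addr0; split => //.
rewrite cardsU (disjoint_setI0 disjPQ) cards0 subn0 cardP cardQ -{1}opp_half addNr.
by apply: completableP => [|k_eq|k_eq|k_eq] //; lia.
Qed.

(* Any 2n + 2 points with nonzero first coordinates have a completable
   subset: remove an opposite pair P (if any) and look for a second one in
   the remaining 2n points. *)
Lemma completable_of_card (B : {set Pt}) : (1 < n)%N ->
  #|B| = (n.*2).+2 -> {in B, forall b, b.1 != 0} -> has_completable_subset B.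
Proof.
move=> n_gt1 cardB B_neq0.
have [[P sPB [cardP sumP1]]|no_opp] := classic (exists2 P : {set Pt},
    P \subset B & #|P| = 2 /\ \sum_(x in P) x.1 = 0); last first.
  have [U sUB cardU] : exists2 U : {set Pt}, U \subset B & #|U| = n.*2.
    by apply: subset_of_card; rewrite cardB; lia.
  apply: (completable_no_opposite cardB B_neq0 sUB cardU) => P sPU cardP.
  apply/eqP => sumP; apply: no_opp.
  by exists P; [exact: subset_trans sPU sUB | split].
have [sumP2|] := eqVneq (\sum_(x in P) x.2) n%:R;
  last exact: completable_pair n_gt1 sPB cardP sumP1.
have sUB : B :\: P \subset B by apply: subsetDl.
have cardU : #|B :\: P| = n.*2 by rewrite cardsDS // cardB cardP; lia.
have [[Q sQU [cardQ sumQ1]]|no_oppU] := classic (exists2 Q : {set Pt},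
    Q \subset B :\: P & #|Q| = 2 /\ \sum_(x in Q) x.1 = 0); last first.
  apply: (completable_no_opposite cardB B_neq0 sUB cardU) => Q sQU cardQ.
  by apply/eqP => sumQ; apply: no_oppU; exists Q.
have sQB := subset_trans sQU sUB.
have [sumQ2|] := eqVneq (\sum_(x in Q) x.2) n%:R;
  last exact: completable_pair n_gt1 sQB cardQ sumQ1.
apply: (completable_two_pairs n_gt1) sumP1 sumQ1 sumP2 sumQ2 => //.
  by rewrite subUset sPB.
by rewrite disjoint_sym disjoints_subset (subset_trans sQU) // setDE setIC subsetIl.
Qed.

Definition has_zero_sum_2n (X : {set Pt}) :=
  exists S : {set Pt}, [/\ S \subset X, #|S| = n.*2 & \sum_(s in S) s = 0].

(* Translation invariance: 2n copies of t sum to 0. *)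
Lemma zero_sum_translate (t : Pt) (X : {set Pt}) :
  has_zero_sum_2n [set x - t | x : Pt in X] -> has_zero_sum_2n X.
Proof.
case=> S [sSX cardS sumS]; exists [set s + t | s : Pt in S]; split.
- apply/subsetP => _ /imsetP [s /(subsetP sSX) /imsetP [x xX ->] ->].
  by rewrite subrK.
- by rewrite card_imset //; apply: addIr.
- rewrite big_imset /=; last by move=> x y _ _; apply: addIr.
  by rewrite big_split /= sumS sumr_const cardS add0r pairMnE !mulrn_double.
Qed.

Lemma translate_off_column (X : {set Pt}) (t : Pt) :
  [set x in [set x - t | x : Pt in X] | x.1 != 0] =
  [set x - t | x : Pt in [set x in X | x.1 != t.1]].
Proof.
apply/setP => z; rewrite inE; apply/andP/imsetP => [[/imsetP [x xX ->] x_off]|[x]].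
  by exists x; rewrite // inE xX -subr_eq0.
by rewrite inE => /andP [xX x_off] ->; split; [exact: imset_f | rewrite /= subr_eq0].
Qed.

(* The normalised problem: X contains all (0, d), d != 0, and 2n + 2 points
   off that line; a completable T among the latter, together with the
   (0, d) for the completing values d, gives the 2n points. *)
Lemma zero_sum_normalized (X : {set Pt}) : (1 < n)%N ->
  (forall d : Z, d != 0 -> (0, d) \in X) ->
  #|[set x in X | x.1 != 0]| = (n.*2).+2 -> has_zero_sum_2n X.
Proof.
move=> n_gt1 X_axis cardB.
have [T sTB [sumT1 [le_T [D [D0 cardD sumD]]]]] :
    has_completable_subset [set x in X | x.1 != 0].
  by apply: completable_of_card => // x; rewrite inE => /andP [].
have sBX : [set x in X | x.1 != 0] \subset X.
  by apply/subsetP => x; rewrite inE => /andP [].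
have inj_axis : injective (fun d : Z => ((0 : Z), d)) by move=> d d' [].
have disj : [disjoint T & [set (0, d) | d in D]].
  rewrite disjoints_subset; apply/subsetP => x /(subsetP sTB).
  by rewrite !inE => /andP [_ x_neq0]; apply: contra x_neq0 => /imsetP [d _ ->].
exists (T :|: [set (0, d) | d in D]); split.
- rewrite subUset (subset_trans sTB sBX) /=.
  apply/subsetP => _ /imsetP [d dD ->]; apply: X_axis.
  by apply: contraNneq D0 => <-.
- by rewrite cardsU (disjoint_setI0 disj) cards0 subn0 card_imset // cardD subnKC.
- rewrite sum_setU_disjoint // big_imset /=; last by move=> d d' _ _; apply: inj_axis.
  rewrite [\sum_(i in D) _]sum_pairE sum_pairE /= sumT1 sumD big1_eq.
  by apply: injective_projections; rewrite /= ?addr0 ?addrN.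
Qed.

End EvenCyclic.

Lemma card_column_values (U V : finType) (X : {set U * V}) (a : U) :
  #|[set y | (a, y) \in X]| = #|[set x in X | x.1 == a]|.
Proof.
rewrite -(card_imset _ (fun y y' (e : (a, y) = (a, y')) => congr1 snd e)).
apply: eq_card => -[x y]; rewrite inE /=.
apply/imsetP/andP => [[y' y'X [-> ->]]|[xyX /eqP xa]].
  by rewrite inE in y'X; split.
by exists y; rewrite ?inE -xa.
Qed.

Lemma card_column_split (U V : finType) (X : {set U * V}) (a : U) :
  (#|[set x in X | x.1 == a]| + #|[set x in X | x.1 != a]| = #|X|)%N.
Proof.
rewrite -(cardID [pred x | x.1 == a] X).
by congr (_ + _); apply: eq_card => x; rewrite !inE andbC.
Qed.

Theorem theorem3p2 (n : nat) (hn : (2 <= n)%N)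
  (X : {set 'Z_(n.*2) * 'Z_(n.*2)}) (hX : #|X| = (4 * n).+1)
  (a : 'Z_(n.*2))
  (ha : #|[set x in X | x.1 == a]| = (n.*2).-1) :
  exists S : {set 'Z_(n.*2) * 'Z_(n.*2)},
    [/\ S \subset X, #|S| = n.*2 & \sum_(s in S) s = 0].
Proof.
have n_gt0 : (0 < n)%N by apply: ltnW.
have [c col_a] : exists c, [set y | (a, y) \in X] = [set~ c].
  by apply: setC1_of_card; rewrite card_Z ?card_column_values // double_gt0.
have cardB : #|[set x in X | x.1 != a]| = (n.*2).+2.
  have card_X : #|X| = ((4 * n)%N).+1 by rewrite hX.
  apply/eqP; rewrite -(eqn_add2l (n.*2).-1) -{1}ha card_column_split card_X.
  by apply/eqP; lia.
pose t : 'Z_(n.*2) * 'Z_(n.*2) := (a, c).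
change (has_zero_sum_2n X); apply: (zero_sum_translate n_gt0 (t := t)).
apply: zero_sum_normalized => // [d d_neq0|].
- apply/imsetP; exists (a, c + d).
    move/setP/(_ (c + d)): col_a; rewrite !inE => ->.
    by rewrite -{2}[c]addr0 (inj_eq (addrI c)).
  by apply: injective_projections; rewrite /= ?subrr // [RHS]addrC addKr.
- by rewrite translate_off_column card_imset //; apply: addIr.
Qed.
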